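(* Let $\alpha\in(0,\frac\pi2)$ and $C_\alpha=(\alpha/\pi)^2+(1-\alpha/\pi)^2$. Let $N^v,N^b\in\{0,1,2,\dots\}$, and let $\{n^0_j\}_{j=1}^{N^v}$, $\{n^+_i,n^-_i\}_{i=1}^{N^b}$ be integers with $\sum_{i=1}^{N^b}(n^+_i+n^-_i)+\sum_{j=1}^{N^v}n^0_j=D$. Then $$\sum_{j=1}^{N^v}(n^0_j)^2+\sum_{i=1}^{N^b}\Big[\Big(n^-_i+\frac\alpha\pi\Big)^2+\Big(n^+_i-\frac\alpha\pi\Big)^2\Big]\ge|D|\,C_\alpha.$$ Furthermore, if $D>0$, equality holds if and only if $n^0_j=0$ for all $j$, $N^b=D$, and $n^+_i=1$, $n^-_i=0$ for $i=1,\dots,D$; while if $D<0$, equality holds if and only if $n^0_j=0$ for all $j$, $N^b=|D|$, and $n^+_i=0$, $n^-_i=-1$ for all $i$. *)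

From mathcomp Require Import all_boot all_order all_algebra.
From mathcomp Require Import reals trigo.
Set Implicit Arguments. Unset Strict Implicit. Unset Printing Implicit Defensive.
Import Order.TTheory GRing.Theory Num.Theory.
Local Open Scope ring_scope.

Definition C_alpha (R : realType) (alpha : R) : R :=
  (alpha / pi) ^+ 2 + (1 - alpha / pi) ^+ 2.

Definition lhs6p2 (R : realType) (alpha : R) (Nv Nb : nat)
  (n0 : 'I_Nv -> int) (np nm : 'I_Nb -> int) : R :=
  \sum_(j < Nv) ((n0 j)%:~R) ^+ 2
  + \sum_(i < Nb) (((nm i)%:~R + alpha / pi) ^+ 2 + ((np i)%:~R - alpha / pi) ^+ 2).

From mathcomp Require Import all_boot all_order all_algebra.
From mathcomp Require Import reals trigo.
From mathcomp Require Import zify ring lra.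
Import Order.TTheory GRing.Theory Num.Theory.
Set Implicit Arguments. Unset Strict Implicit. Unset Printing Implicit Defensive.
Local Open Scope ring_scope.

(* Put a = alpha / pi and C = a^2 + (1 - a)^2, and call D the charge of the configuration.
   The energy minus D C splits into one excess per site: n^2 - C n for a vertex, and
     (m + a)^2 + (p - a)^2 - C (p + m) = m^2 - (C - 2a) m + (p - 1)^2 - (2a^2 - 1) (p - 1)
   for a bond (p, m) = (n^+, n^-). Every term k^2 - c k with k integer and |c| < 1 is
   nonnegative and vanishes only at k = 0, which gives the bound D C together with its
   equality cases n^0 = 0, (n^+, n^-) = (1, 0). For D >= 0 this bound is |D| C; negative
   charges reduce to positive ones through n^0 -> -n^0, (n^+, n^-) -> (-n^-, -n^+), which
   negates the charge and preserves the energy. *)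

Definition charge (Nv Nb : nat) (n0 : 'I_Nv -> int) (np nm : 'I_Nb -> int) : int :=
  \sum_(i < Nb) (np i + nm i) + \sum_(j < Nv) n0 j.

Lemma charge_opp (Nv Nb : nat) (n0 : 'I_Nv -> int) (np nm : 'I_Nb -> int) :
  charge (fun j => - n0 j) (fun i => - nm i) (fun i => - np i) = - charge n0 np nm.
Proof.
rewrite /charge opprD -!sumrN; congr (_ + _).
by apply: eq_bigr => i _; rewrite opprD addrC.
Qed.

Lemma charge_ground_state (Nv Nb : nat) (n0 : 'I_Nv -> int) (np nm : 'I_Nb -> int) :
  (forall j, n0 j = 0) -> (forall i, np i = 1 /\ nm i = 0) -> charge n0 np nm = Nb.
Proof.
move=> n0_0 bond_10; rewrite /charge [X in _ + X]big1 // addr0.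
rewrite (eq_bigr (fun=> 1)) => [|i _]; last by have [-> ->] := bond_10 i.
by rewrite sumr_const card_ord natz.
Qed.

Section Energy.
Variable R : realDomainType.

Lemma leif_mul_sqr_int {c : R} (k : int) :
  -1 < c < 1 -> k%:~R * c <= k%:~R ^+ 2 ?= iff (k == 0).
Proof.
case/andP=> c_gtN1 c_lt1; apply/leifP; have [->|k_neq0] := eqVneq k 0.
  by rewrite mul0r expr0n.
have [k_le|k_ge] : k <= -1 \/ 1 <= k by lia.
- have : k%:~R <= -1 :> R by rewrite -(intrN R 1) ler_int.
  nra.
- have : 1 <= k%:~R :> R by rewrite ler1z.
  nra.
Qed.

Variable a : R.
Hypothesis a_bounds : 0 < a < 1.

Local Notation C := (a ^+ 2 + (1 - a) ^+ 2).

Lemma vertex_leif (n : int) : n%:~R * C <= n%:~R ^+ 2 ?= iff (n == 0).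
Proof.
case/andP: a_bounds => a_gt0 a_lt1.
have c_n : -1 < C < 1 by apply/andP; split; nra.
exact: leif_mul_sqr_int.
Qed.

Lemma bond_leif (p m : int) :
  (p + m)%:~R * C <= (m%:~R + a) ^+ 2 + (p%:~R - a) ^+ 2
  ?= iff (p == 1) && (m == 0).
Proof.
case/andP: a_bounds => a_gt0 a_lt1.
have c_p : -1 < 2 * a ^+ 2 - 1 < 1 by apply/andP; split; nra.
have c_m : -1 < C - 2 * a < 1 by apply/andP; split; nra.
have := leifD (leif_mul_sqr_int (p - 1) c_p) (leif_mul_sqr_int m c_m).
pose K := 2 * a * (m%:~R - p%:~R) + 2 * a ^+ 2 + 2 * p%:~R - 1.
rewrite intrB subr_eq0 -(mono_leif (lerD2r K)) intrD.
by congr (_ <= _ ?= iff _); rewrite /K; ring.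
Qed.

Definition energy (Nv Nb : nat) (n0 : 'I_Nv -> int) (np nm : 'I_Nb -> int) : R :=
  \sum_(j < Nv) (n0 j)%:~R ^+ 2
  + \sum_(i < Nb) (((nm i)%:~R + a) ^+ 2 + ((np i)%:~R - a) ^+ 2).

Lemma energy_opp (Nv Nb : nat) (n0 : 'I_Nv -> int) (np nm : 'I_Nb -> int) :
  energy (fun j => - n0 j) (fun i => - nm i) (fun i => - np i) = energy n0 np nm.
Proof.
rewrite /energy; congr (_ + _); apply: eq_bigr => i _; rewrite !intrN; ring.
Qed.

Lemma energy_leif (Nv Nb : nat) (n0 : 'I_Nv -> int) (np nm : 'I_Nb -> int) :
  (charge n0 np nm)%:~R * C <= energy n0 np nm
  ?= iff [forall j, n0 j == 0] && [forall i, (np i == 1) && (nm i == 0)].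
Proof.
rewrite /charge /energy intrD mulrDl addrC !rmorph_sum /= !mulr_suml.
exact: leifD (leif_sum (fun j _ => vertex_leif _)) (leif_sum (fun i _ => bond_leif _ _)).
Qed.

Lemma energy_nonneg_charge (Nv Nb : nat) (n0 : 'I_Nv -> int) (np nm : 'I_Nb -> int) :
  0 <= charge n0 np nm ->
  `|charge n0 np nm|%:~R * C <= energy n0 np nm
  /\ (energy n0 np nm = `|charge n0 np nm|%:~R * C <->
      (forall j, n0 j = 0) /\ (Nb : int) = charge n0 np nm /\
      (forall i, np i = 1 /\ nm i = 0)).
Proof.
move=> charge_ge0; have [le_energy eq_energy] := energy_leif n0 np nm.
rewrite ger0_norm //; split=> //; split.
- move/esym/eqP; rewrite eq_energy => /andP[/eqfunP n0_0 /forallP bonds].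
  have bond_10 i : np i = 1 /\ nm i = 0 by have /andP[/eqP -> /eqP ->] := bonds i.
  by split=> //; split=> //; rewrite charge_ground_state.
- case=> n0_0 [_ bond_10]; apply/esym/eqP; rewrite eq_energy.
  apply/andP; split; first exact/eqfunP.
  by apply/forallP => i; have [-> ->] := bond_10 i; rewrite !eqxx.
Qed.

Lemma energy_nonpos_charge (Nv Nb : nat) (n0 : 'I_Nv -> int) (np nm : 'I_Nb -> int) :
  charge n0 np nm <= 0 ->
  `|charge n0 np nm|%:~R * C <= energy n0 np nm
  /\ (energy n0 np nm = `|charge n0 np nm|%:~R * C <->
      (forall j, n0 j = 0) /\ (Nb : int) = `|charge n0 np nm| /\
      (forall i, np i = 0 /\ nm i = -1)).
Proof.
move=> charge_le0.
have := energy_nonneg_charge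
  (n0 := fun j => - n0 j) (np := fun i => - nm i) (nm := fun i => - np i).
rewrite charge_opp energy_opp normrN oppr_ge0 ler0_norm // => /(_ charge_le0)[-> ->].
split=> //; split=> -[n0_0 [-> bonds]];
  by split=> [j|]; [have := n0_0 j | split=> // i; have := bonds i]; lia.
Qed.

End Energy.

Theorem lemma6p2 (R : realType) (alpha : R) (Nv Nb : nat)
  (n0 : 'I_Nv -> int) (np nm : 'I_Nb -> int) (D : int)
  (halpha : 0 < alpha < pi / 2%:R)
  (hD : \sum_(i < Nb) (np i + nm i) + \sum_(j < Nv) n0 j = D) :
  `|D|%:~R * C_alpha alpha <= lhs6p2 alpha n0 np nm
  /\ (0 < D ->
      (lhs6p2 alpha n0 np nm = `|D|%:~R * C_alpha alpha <->
       (forall j, n0 j = 0) /\ (Nb : int) = D /\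
       (forall i, np i = 1 /\ nm i = 0)))
  /\ (D < 0 ->
      (lhs6p2 alpha n0 np nm = `|D|%:~R * C_alpha alpha <->
       (forall j, n0 j = 0) /\ (Nb : int) = `|D| /\
       (forall i, np i = 0 /\ nm i = -1))).
Proof.
have a_bounds : 0 < alpha / pi < 1.
  have pi_gt0 : (0 : R) < pi := pi_gt0 R.
  case/andP: halpha => alpha_gt0 alpha_lt; rewrite divr_gt0 // ltr_pdivrMr // mul1r.
  lra.
rewrite -[lhs6p2 _ _ _ _]/(energy (alpha / pi) n0 np nm) /C_alpha.
rewrite -[LHS]/(charge n0 np nm) in hD; subst D.
have [charge_lt0|charge_ge0] := ltrP (charge n0 np nm) 0.
- have [le_energy eq_energy] := energy_nonpos_charge a_bounds (ltW charge_lt0).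
  by split=> //; split=> // charge_gt0; lia.
- have [le_energy eq_energy] := energy_nonneg_charge a_bounds charge_ge0.
  by split=> //; split=> // charge_lt0; lia.
Qed.
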